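(* Let $\boldsymbol\alpha\in\mathbb C^d$. If the Zariski closure of the equivalence class $[\boldsymbol\alpha]$ is all of $\mathbb C^d$, then $\mathbb R_{>0}(\boldsymbol\alpha)$ is nonempty.
   Context: $A\subset\mathbb Z^d$ is a finite set generating the group $\mathbb Z^d$; $\mathbb NA$ its monoid. For a face $\tau$ of the cone $\mathbb R_{\ge0}A$ and $\boldsymbol\alpha\in\mathbb C^d$, $E_\tau(\boldsymbol\alpha)=\{\boldsymbol\lambda\in\mathbb C(A\cap\tau)/\mathbb Z(A\cap\tau):\boldsymbol\alpha-\boldsymbol\lambda\in\mathbb NA+\mathbb Z(A\cap\tau)\}$; $\boldsymbol\alpha\sim\boldsymbol\beta$ iff $E_\tau(\boldsymbol\alpha)=E_\tau(\boldsymbol\beta)$ for all faces $\tau$, and $[\boldsymbol\alpha]\subseteq\mathbb C^d$ is the equivalence class of $\boldsymbol\alpha$. For a facet $\sigma$, $F_\sigma$ is the unique linear form (extended $\mathbb C$-linearly) with $F_\sigma(\mathbb R_{\ge0}A)\ge0$, $F_\sigma(\sigma)=0$, $F_\sigma(\mathbb Z^d)=\mathbb Z$. $\mathcal F_+(\boldsymbol\alpha)=\{\sigma:F_\sigma(\boldsymbol\alpha)\in F_\sigma(\mathbb NA)\}$, $\mathcal F_-(\boldsymbol\alpha)=\{\sigma:F_\sigma(\boldsymbol\alpha)\in\mathbb Z\setminus F_\sigma(\mathbb NA)\}$, and $\mathbb R_{>0}(\boldsymbol\alpha)=\{\boldsymbol\gamma\in\mathbb R^d:F_\sigma(\boldsymbol\gamma)>0\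 (\sigma\in\mathcal F_+(\boldsymbol\alpha)),\ F_\sigma(\boldsymbol\gamma)<0\ (\sigma\in\mathcal F_-(\boldsymbol\alpha))\}$. *)

From HB Require Import structures.
From mathcomp Require Import all_boot all_order all_algebra.
From mathcomp Require Import reals complex.
From mathcomp Require mpoly.

Set Implicit Arguments.
Unset Strict Implicit.
Unset Printing Implicit Defensive.

Import Order.TTheory GRing.Theory Num.Theory.
Local Open Scope ring_scope.
Local Open Scope complex_scope.

Section Defs.
Variables (R : realType) (d : nat) (A : seq 'rV[int]_d).

Local Notation C := (R[i]).

Definition vecR (a : 'rV[int]_d) : 'rV[R]_d := map_mx (fun z : int => z%:~R) a.
Definition vecC (a : 'rV[int]_d) : 'rV[C]_d := map_mx (fun z : int => z%:~R) a.

Definition linR (f x : 'rV[R]_d) : R := \sum_(i < d) f 0 i * x 0 i.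
Definition linC (f : 'rV[R]_d) (x : 'rV[C]_d) : C := \sum_(i < d) (f 0 i)%:C * x 0 i.

Definition generates_Zd : Prop :=
  forall z : 'rV[int]_d, exists c : 'I_(size A) -> int,
    z = \sum_(i < size A) c i *: A`_i.

Definition cone (x : 'rV[R]_d) : Prop :=
  exists c : 'I_(size A) -> R, (forall i, 0 <= c i) /\
    x = \sum_(i < size A) c i *: vecR A`_i.

Definition is_face (tau : 'rV[R]_d -> Prop) : Prop :=
  exists f : 'rV[R]_d, (forall x, cone x -> 0 <= linR f x) /\
    (forall x, tau x <-> (cone x /\ linR f x = 0)).

(* facets: faces whose linear span has dimension d - 1 *)
Definition is_facet (sigma : 'rV[R]_d -> Prop) : Prop :=
  is_face sigma /\
  (exists m (M : 'M[R]_(m, d)), (forall i, sigma (row i M)) /\ (\rank M).+1 = d) /\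
  (forall m (M : 'M[R]_(m, d)), (forall i, sigma (row i M)) -> ((\rank M).+1 <= d)%N).

(* f is (the coefficient vector of) the primitive form F_sigma of the facet sigma *)
Definition is_Fsigma (sigma : 'rV[R]_d -> Prop) (f : 'rV[R]_d) : Prop :=
  (forall x, cone x -> 0 <= linR f x) /\
  (forall x, sigma x -> linR f x = 0) /\
  (forall r : R, (exists z : 'rV[int]_d, linR f (vecR z) = r) <->
                 (exists n : int, r = n%:~R)).

Definition in_NA (z : 'rV[int]_d) : Prop :=
  exists c : 'I_(size A) -> nat, z = \sum_(i < size A) (c i)%:R *: A`_i.

Definition in_Cspan (tau : 'rV[R]_d -> Prop) (l : 'rV[C]_d) : Prop :=
  exists c : 'I_(size A) -> C, (forall i : 'I_(size A), ~ tau (vecR A`_i) -> c i = 0) /\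
    l = \sum_(i < size A) c i *: vecC A`_i.

Definition in_NA_plus_Ztau (tau : 'rV[R]_d -> Prop) (v : 'rV[C]_d) : Prop :=
  exists (c : 'I_(size A) -> nat) (e : 'I_(size A) -> int),
    (forall i : 'I_(size A), ~ tau (vecR A`_i) -> e i = 0) /\
    v = \sum_(i < size A) ((c i)%:R + (e i)%:~R) *: vecC A`_i.

(* E_tau(alpha), represented by its (Z(A cap tau)-stable) preimage in C(A cap tau) *)
Definition E_tau (tau : 'rV[R]_d -> Prop) (alpha : 'rV[C]_d) (l : 'rV[C]_d) : Prop :=
  in_Cspan tau l /\ in_NA_plus_Ztau tau (alpha - l).

Definition equiv_alpha (alpha beta : 'rV[C]_d) : Prop :=
  forall tau, is_face tau -> forall l, E_tau tau alpha l <-> E_tau tau beta l.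

Definition eq_class (alpha : 'rV[C]_d) (beta : 'rV[C]_d) : Prop := equiv_alpha alpha beta.

Definition zariski_closure (S : 'rV[C]_d -> Prop) (x : 'rV[C]_d) : Prop :=
  forall p : mpoly.mpoly d C,
    (forall y, S y -> mpoly.meval (fun i => y 0 i) p = 0) ->
    mpoly.meval (fun i => x 0 i) p = 0.

Definition in_Fplus (f : 'rV[R]_d) (alpha : 'rV[C]_d) : Prop :=
  exists z, in_NA z /\ linC f alpha = (linR f (vecR z))%:C.

Definition in_Fminus (f : 'rV[R]_d) (alpha : 'rV[C]_d) : Prop :=
  (exists n : int, linC f alpha = n%:~R) /\
  ~ (exists z, in_NA z /\ linC f alpha = (linR f (vecR z))%:C).

Definition Rpos (alpha : 'rV[C]_d) (g : 'rV[R]_d) : Prop :=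
  forall sigma f, is_facet sigma -> is_Fsigma sigma f ->
    (in_Fplus f alpha -> 0 < linR f g) /\ (in_Fminus f alpha -> linR f g < 0).

End Defs.

(* A facet form F is integer valued, F(NA) contains every large integer, and F is
   determined by the generators on which it vanishes; hence only finitely many affine
   hyperplanes F = k (F a facet form, 0 <= k <= K) matter.  A Zariski-dense class
   [alpha] is not covered by them, so it contains some beta off all of them, and
   g = Re beta works.  Membership in F_+ depends only on the class: if F(alpha) is in
   F(NA) then so is F(beta), a positive integer equal to F(g).  If F(alpha) is an
   integer outside F(NA), then F(beta) - F(alpha) is an integer, and F(beta) >= 0 would
   make it either one of the avoided values 0..K or an element of F(NA); so F(g) < 0. *)

From HB Require Import structures.
From mathcomp Require Import all_boot all_order all_algebra.
From mathcomp Require Import reals complex.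
From mathcomp Require Import zify boolp mpoly.

Set Implicit Arguments.
Unset Strict Implicit.
Unset Printing Implicit Defensive.
Import Order.TTheory GRing.Theory Num.Theory.
Local Open Scope ring_scope.
Local Open Scope complex_scope.

Lemma consecutive_nat_comb (p m : nat) :
  (p * p <= m)%N -> exists u v, m = (u * p + v * p.+1)%N.
Proof.
case: p => [|p] le_m; first by exists 0%N, m; rewrite muln1.
exists (m %/ p.+1 - m %% p.+1)%N, (m %% p.+1)%N.
have := divn_eq m p.+1; have := ltn_pmod m (ltn0Sn p).
have : (p.+1 <= m %/ p.+1)%N by rewrite leq_divRL.
nia.
Qed.

Lemma eventually_all_seq (T : eqType) (s : seq T) (P : T -> nat -> Prop) :
  (forall x, x \in s -> exists K, forall m, (K <= m)%N -> P x m) ->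
  exists K, forall x, x \in s -> forall m, (K <= m)%N -> P x m.
Proof.
elim: s => [|x s IHs] ev_s; first by exists 0%N.
have [K1 ev_x] := ev_s x (mem_head x s).
have [K2 ev_s'] : exists K, forall y, y \in s -> forall m, (K <= m)%N -> P y m.
  by apply: IHs => y ys; apply: ev_s; rewrite inE ys orbT.
exists (maxn K1 K2) => y; rewrite inE => /predU1P[-> | ys] m; rewrite geq_max => /andP[m1 m2].
- exact: ev_x.
- exact: ev_s'.
Qed.

Section LinearForms.
Variables (R : realType) (d : nat).
Local Notation C := R[i].
Implicit Types (f g x : 'rV[R]_d) (v : 'rV[C]_d) (a : 'rV[int]_d).

Lemma linR_is_scalar f : scalar (linR f).
Proof.
move=> k x y; rewrite /linR mulr_sumr -big_split; apply: eq_bigr => i _.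
by rewrite !mxE mulrDr mulrCA.
Qed.
HB.instance Definition _ f :=
  GRing.isLinear.Build R 'rV[R]_d R *%R (linR f) (linR_is_scalar f).

Lemma linC_is_scalar f : scalar (linC f).
Proof.
move=> k v w; rewrite /linC mulr_sumr -big_split; apply: eq_bigr => i _.
by rewrite !mxE mulrDr mulrCA.
Qed.
HB.instance Definition _ f :=
  GRing.isLinear.Build C 'rV[C]_d C *%R (linC f) (linC_is_scalar f).

HB.instance Definition _ := GRing.Additive.copy (@vecR R d) (map_mx intr).
HB.instance Definition _ := GRing.Additive.copy (@vecC R d) (map_mx intr).

Lemma vecR_natZ (k : nat) a : vecR R (k%:R *: a) = k%:R *: vecR R a.
Proof. by rewrite !scaler_nat raddfMn. Qed.

Lemma vecC_natZ (k : nat) a : vecC R (k%:R *: a) = k%:R *: vecC R a.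
Proof. by rewrite !scaler_nat raddfMn. Qed.

Lemma vecR_intZ (k : int) a : vecR R (k *: a) = k%:~R *: vecR R a.
Proof. by rewrite scaler_int -raddfMz -scaler_int intz. Qed.

Lemma vecC_intZ (k : int) a : vecC R (k *: a) = k%:~R *: vecC R a.
Proof. by rewrite scaler_int -raddfMz -scaler_int intz. Qed.

Lemma linC_vecC f a : linC f (vecC R a) = (linR f (vecR R a))%:C.
Proof.
rewrite /linC /linR rmorph_sum; apply: eq_bigr => i _.
by rewrite !mxE rmorphM /= rmorph_int.
Qed.

Definition reV v : 'rV[R]_d := map_mx (@complex.Re R) v.
Definition imV v : 'rV[R]_d := map_mx (@complex.Im R) v.

Lemma linC_Re f v : complex.Re (linC f v) = linR f (reV v).
Proof.
rewrite /linC /linR; elim/big_rec2: _ => [//|i y z _ <-].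
by rewrite !mxE; case: (v 0 i) z => a b [c e] /=; rewrite mul0r subr0.
Qed.

Lemma linC_Im f v : complex.Im (linC f v) = linR f (imV v).
Proof.
rewrite /linC /linR; elim/big_rec2: _ => [//|i y z _ <-].
by rewrite !mxE; case: (v 0 i) z => a b [c e] /=; rewrite mul0r addr0.
Qed.

Lemma linR_mulmx f x : linR f x = (x *m f^T) 0 0.
Proof. by rewrite /linR mxE; apply: eq_bigr => i _; rewrite mxE mulrC. Qed.

Lemma linR0l x : linR 0 x = 0.
Proof. by rewrite /linR big1 // => i _; rewrite mxE mul0r. Qed.

Lemma linRZl (c : R) f x : linR (c *: f) x = c * linR f x.
Proof. by rewrite /linR mulr_sumr; apply: eq_bigr => i _; rewrite mxE mulrA. Qed.

Lemma linR_delta f (j : 'I_d) : linR f (delta_mx 0 j) = f 0 j.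
Proof.
rewrite /linR (bigD1 j) //= big1 ?addr0 => [|i /negbTE ij]; first by rewrite mxE !eqxx mulr1.
by rewrite mxE ij andbF mulr0.
Qed.

Lemma proportional_forms f g x :
  (forall y, linR f y = 0 -> linR g y = 0) -> linR f x = 1 -> g = linR g x *: f.
Proof.
move=> ker_fg fx1; apply/rowP => j; rewrite mxE -!linR_delta.
set y := delta_mx 0 j.
have : linR g (y - linR f y *: x) = 0.
  by apply: ker_fg; rewrite linearB linearZ /= fx1 mulr1 subrr.
by rewrite linearB linearZ /= => /eqP; rewrite subr_eq0 mulrC => /eqP.
Qed.

End LinearForms.

Section AffineHyperplanes.
Variables (R : realType) (d : nat).
Local Notation C := R[i].
Implicit Types (f : 'rV[R]_d) (x : 'rV[C]_d) (L : seq ('rV[R]_d * C)).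

Definition linC_mpoly f : {mpoly C[d]} := \sum_(j < d) (f 0 j)%:C *: 'X_j.

Lemma meval_linC_mpoly f x : (linC_mpoly f).@[fun j => x 0 j] = linC f x.
Proof. by rewrite /linC_mpoly raddf_sum; apply: eq_bigr => j _ /=; rewrite mevalZ mevalXU. Qed.

(* Along the moment curve t |-> (t, t^2, ..., t^d) every affine hyperplane
   cuts out the roots of a nonzero polynomial in t. *)
Lemma exists_off_hyperplanes L : all (fun p => p.1 != 0) L ->
  exists x, \prod_(p <- L) (linC p.1 x - p.2) != 0.
Proof.
move=> nzL.
pose Q (p : 'rV[R]_d * C) : {poly C} := \sum_(j < d) (p.1 0 j)%:C *: 'X ^+ j.+1 - p.2%:P.
have Q_neq0 p : p.1 != 0 -> Q p != 0.
  move=> /eqP f_neq0; apply: contra_notN f_neq0 => /eqP Q0.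
  apply/rowP => j; have /eqP := congr1 (fun q : {poly C} => q`_j.+1) Q0.
  rewrite coefB coefC coef0 subr0 coef_sum (bigD1 j) //= coefZ coefXn eqxx mulr1.
  rewrite big1 ?addr0 => [|k kj]; last first.
    by rewrite coefZ coefXn eqSS eq_sym val_eqE (negbTE kj) mulr0.
  by rewrite fmorph_eq0 mxE => /eqP.
have : \prod_(p <- L) Q p != 0.
  rewrite prodf_seq_neq0; apply/allP => p pL; apply/implyP => _.
  exact: Q_neq0 (allP nzL p pL).
case/closed_nonrootP => t; rewrite /root horner_prod => Qt.
exists (\row_j t ^+ j.+1); rewrite (eq_bigr (fun p => (Q p).[t])) // => p _.
rewrite /Q hornerD hornerN hornerC horner_sum /linC; congr (_ + _).
by apply: eq_bigr => j _; rewrite hornerZ hornerXn mxE.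
Qed.

Lemma zariski_dense_off_hyperplanes (S : 'rV[C]_d -> Prop) L :
  (forall x, zariski_closure S x) -> all (fun p => p.1 != 0) L ->
  exists2 x, S x & forall p, p \in L -> linC p.1 x != p.2.
Proof.
move=> dense nzL.
pose P := \prod_(p <- L) (linC_mpoly p.1 - p.2%:MP).
have evalP x : P.@[fun j => x 0 j] = \prod_(p <- L) (linC p.1 x - p.2).
  by rewrite rmorph_prod; apply: eq_bigr => p _; rewrite rmorphB /= mevalC meval_linC_mpoly.
have [x0 Px0] := exists_off_hyperplanes nzL.
have [[x Sx Px] | noS] := pselect (exists2 x, S x & P.@[fun j => x 0 j] != 0).
  exists x => // p pL; move: Px; rewrite evalP prodf_seq_neq0 => /allP/(_ p pL).
  by rewrite subr_eq0.
case/negP: Px0; rewrite -evalP; apply/eqP; apply: dense => y Sy.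
by apply/eqP; apply: contra_notT noS => Py; exists y.
Qed.

End AffineHyperplanes.

Section Cone.
Variables (R : realType) (d : nat) (A : seq 'rV[int]_d).
Local Notation C := R[i].
Local Notation n := (size A).
Local Notation vR := (@vecR R d).
Local Notation vC := (@vecC R d).
Implicit Types (f g x : 'rV[R]_d) (z : 'rV[int]_d) (tau sigma : 'rV[R]_d -> Prop).
Hypothesis genA : generates_Zd A.

Lemma cone_gen (i : 'I_n) : cone A (vR A`_i).
Proof.
exists (fun j => (j == i)%:R); split=> [j|]; first exact: ler0n.
rewrite (bigD1 i) //= eqxx scale1r big1 ?addr0 // => j /negbTE ->.
by rewrite scale0r.
Qed.

Lemma NA_cone z : in_NA A z -> cone A (vR z).
Proof.
move=> [c ->]; exists (fun i => (c i)%:R); split=> [i|]; first exact: ler0n.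
by rewrite raddf_sum; apply: eq_bigr => i _ /=; rewrite vecR_natZ.
Qed.

Lemma linR_natcomb f (c : 'I_n -> nat) :
  linR f (vR (\sum_(i < n) (c i)%:R *: A`_i)) = \sum_(i < n) (c i)%:R * linR f (vR A`_i).
Proof. by rewrite !raddf_sum; apply: eq_bigr => i _ /=; rewrite vecR_natZ linearZ. Qed.

Lemma linC_comb f (k : 'I_n -> C) :
  linC f (\sum_(i < n) k i *: vC A`_i) = \sum_(i < n) k i * (linR f (vR A`_i))%:C.
Proof. by rewrite raddf_sum; apply: eq_bigr => i _ /=; rewrite linearZ /= linC_vecC. Qed.

Definition gens_mx tau : 'M[R]_(n, d) :=
  \matrix_(i < n) (`[< tau (vR A`_i) >]%:R *: vR A`_i).

Lemma face_sub_gens tau x : is_face A tau -> tau x -> (x <= gens_mx tau)%MS.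
Proof.
move=> [f0 [f0_ge0 tauE]] /tauE[[c [c_ge0 ->]] f0x].
have f0_gen i : 0 <= c i * linR f0 (vR A`_i).
  by apply: mulr_ge0; [exact: c_ge0 | exact/f0_ge0/cone_gen].
have c_tau i : c i != 0 -> tau (vR A`_i).
  move=> ci_neq0; apply/tauE; split; first exact: cone_gen.
  move: f0x; rewrite raddf_sum /=; under eq_bigr do rewrite linearZ /=.
  move/(psumr_eq0P (fun j _ => f0_gen j))/(_ i isT)/eqP.
  by rewrite mulf_eq0 (negbTE ci_neq0) => /eqP.
suff -> : \sum_(i < n) c i *: vR A`_i = \row_i c i *m gens_mx tau by exact: submxMl.
rewrite mulmx_sum_row; apply: eq_bigr => i _; rewrite rowK mxE scalerA.
have [-> | /c_tau/asboolT ->] := eqVneq (c i) 0; first by rewrite !mul0r.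
by rewrite mulr1.
Qed.

Lemma sub_gens_comb tau x : (x <= gens_mx tau)%MS ->
  exists r : 'I_n -> R, (forall i : 'I_n, ~ tau (vR A`_i) -> r i = 0) /\
    x = \sum_(i < n) r i *: vR A`_i.
Proof.
move=> x_gens.
exists (fun i : 'I_n => (x *m pinvmx (gens_mx tau)) 0 i * `[< tau (vR A`_i) >]%:R).
split=> [i /asboolPn/negbTE -> | ]; first by rewrite mulr0.
rewrite -{1}(mulmxKpV x_gens) mulmx_sum_row; apply: eq_bigr => i _.
by rewrite rowK scalerA.
Qed.

Lemma gens_span_C (alpha : 'rV[C]_d) :
  exists c : 'I_n -> C, alpha = \sum_(i < n) c i *: vC A`_i.
Proof.
have [E E_delta] := fin_all_exists (fun j : 'I_d => genA (delta_mx 0 j)).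
exists (fun i => \sum_(j < d) alpha 0 j * (E j i)%:~R).
rewrite [LHS]row_sum_delta.
under eq_bigr => j _.
  have -> : delta_mx 0 j = vC (delta_mx 0 j) by apply/rowP => k; rewrite !mxE; case: (_ && _).
  rewrite E_delta raddf_sum scaler_sumr.
  under eq_bigr do rewrite /= vecC_intZ scalerA.
  over.
by rewrite exchange_big /=; apply: eq_bigr => i _; rewrite scaler_suml.
Qed.

(* For the face tau = cone itself, cut out by the zero form, alpha lies in
   E_tau(alpha) = E_tau(beta), i.e. beta - alpha lies in NA + ZA. *)
Lemma class_shift alpha beta : eq_class A alpha beta -> exists z, beta = alpha + vC z.
Proof.
move=> ab; pose tau x := cone A x /\ linR 0 x = 0.
have face_tau : is_face A tau by exists 0; split=> // x _; rewrite linR0l.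
have E_alpha : E_tau A tau alpha alpha.
  split; last first.
    exists (fun=> 0%N), (fun=> 0); split=> //.
    by rewrite subrr big1 // => i _; rewrite addr0 scale0r.
  have [c alphaE] := gens_span_C alpha; exists c; split=> // i [].
  by split; [exact: cone_gen | exact: linR0l].
have [_ [c [e [_ baE]]]] := (ab tau face_tau alpha).1 E_alpha.
exists (\sum_(i < n) ((c i)%:Z + e i) *: A`_i).
apply/eqP; rewrite addrC -subr_eq baE raddf_sum; apply/eqP/eq_bigr => i _ /=.
by rewrite vecC_intZ intrD.
Qed.

Section Facet.
Variables (sigma : 'rV[R]_d -> Prop) (f : 'rV[R]_d).
Hypotheses (facet_sigma : is_facet A sigma) (Fsigma_f : is_Fsigma A sigma f).

Lemma Fsigma_ge0 x : cone A x -> 0 <= linR f x.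
Proof. by case: Fsigma_f => f_ge0 _; apply: f_ge0. Qed.

Lemma Fsigma_sigma x : sigma x -> linR f x = 0.
Proof. by case: Fsigma_f => _ [f_sigma _]; apply: f_sigma. Qed.

Lemma Fsigma_int z : exists k : int, linR f (vR z) = k%:~R.
Proof. by case: Fsigma_f => _ [_ f_int]; apply/(f_int _).1; exists z. Qed.

Lemma Fsigma_unit : exists z, linR f (vR z) = 1.
Proof. by case: Fsigma_f => _ [_ f_int]; apply/(f_int 1); exists 1. Qed.

Lemma Fsigma_neq0 : f != 0.
Proof.
have [z] := Fsigma_unit; apply: contra_eq_neq => ->.
by rewrite linR0l eq_sym oner_neq0.
Qed.

Lemma Fsigma_gen_nat :
  exists a : 'I_n -> nat, forall i : 'I_n, linR f (vR A`_i) = (a i)%:R.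
Proof.
suff /fin_all_exists : forall i : 'I_n, exists a : nat, linR f (vR A`_i) = a%:R by [].
move=> i; have [k fk] := Fsigma_int A`_i.
have k_ge0 : 0 <= k by rewrite -(ler0z R) -fk; apply/Fsigma_ge0/cone_gen.
by exists `|k|%N; rewrite fk -{1}(gez0_abs k_ge0).
Qed.

(* Writing some z with F z = 1 as a difference of two N-combinations of generators puts
   two consecutive values p, p+1 in F(NA), and every m >= p^2 is an N-combination of them. *)
Lemma Fsigma_NA_cofinite :
  exists K, forall m, (K <= m)%N -> exists z, in_NA A z /\ linR f (vR z) = m%:R.
Proof.
have [a fa] := Fsigma_gen_nat.
have val_comb (c : 'I_n -> nat) :
    linR f (vR (\sum_(i < n) (c i)%:R *: A`_i)) = (\sum_(i < n) c i * a i)%N%:R.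
  by rewrite linR_natcomb natr_sum; apply: eq_bigr => i _; rewrite fa natrM.
have [cN [cP cPN]] : exists cN cP : 'I_n -> nat,
    (\sum_(i < n) cP i * a i = (\sum_(i < n) cN i * a i).+1)%N.
  have [z1 fz1] := Fsigma_unit; have [e z1E] := genA z1.
  exists (fun i => if 0 <= e i then 0%N else `|e i|%N).
  exists (fun i => if 0 <= e i then `|e i|%N else 0%N).
  apply/eqP; rewrite -(eqr_nat R) mulrSr addrC -subr_eq -[X in _ == X]fz1 z1E.
  rewrite !natr_sum -sumrB.
  rewrite raddf_sum linear_sum; apply/eqP/eq_bigr => i _ /=.
  rewrite vecR_intZ linearZ /= fa !natrM -mulrBl; congr (_ * _).
  by case: (e i) => k /=; rewrite ?subr0 ?sub0r ?NegzE ?mulrNz.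
set p := (\sum_(i < n) cN i * a i)%N in cPN.
exists (p * p)%N => m /consecutive_nat_comb[u [v ->]].
exists (\sum_(i < n) (u * cN i + v * cP i)%N%:R *: A`_i); split; first by eexists.
rewrite val_comb -cPN !big_distrr -big_split /=; congr _%:R.
by apply: eq_bigr => i _; rewrite mulnDl !mulnA.
Qed.

Lemma facet_ker_sub_gens x : linR f x = 0 -> (x <= gens_mx sigma)%MS.
Proof.
move: facet_sigma => [face_sigma [[m [M [M_sigma rankM]]] _]] fx0.
have ker_sub (y : 'rV[R]_d) : linR f y = 0 -> (y <= kermx f^T)%MS.
  by move=> fy0; apply/sub_kermxP/rowP => j; rewrite ord1 -linR_mulmx fy0 mxE.
have M_ker : (M <= kermx f^T)%MS.
  by apply/row_subP => k; apply/ker_sub; case: Fsigma_f => _ [-> //].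
have ker_M : (kermx f^T <= M)%MS.
  rewrite -(geq_leqif (mxrank_leqif_sup M_ker)) mxrank_ker mxrank_tr rank_rV.
  by rewrite Fsigma_neq0; lia.
have M_gens : (M <= gens_mx sigma)%MS.
  by apply/row_subP => k; apply: face_sub_gens.
exact: submx_trans (ker_sub x fx0) (submx_trans ker_M M_gens).
Qed.

Lemma facet_ker_Cspan v : linC f v = 0 -> in_Cspan A sigma v.
Proof.
move=> fv0.
have re0 : linR f (reV v) = 0 by rewrite -linC_Re fv0.
have im0 : linR f (imV v) = 0 by rewrite -linC_Im fv0.
have [r [r_sigma reE]] := sub_gens_comb (facet_ker_sub_gens re0).
have [s [s_sigma imE]] := sub_gens_comb (facet_ker_sub_gens im0).
exists (fun i => (r i)%:C + 'i * (s i)%:C); split.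
  by move=> i /[dup] /r_sigma -> /s_sigma ->; rewrite mulr0 addr0.
apply/rowP => j; rewrite [LHS]complexE.
have -> : complex.Re (v 0 j) = reV v 0 j by rewrite mxE.
have -> : complex.Im (v 0 j) = imV v 0 j by rewrite mxE.
rewrite reE imE !summxE !rmorph_sum mulr_sumr -big_split /=.
by apply: eq_bigr => i _; rewrite !mxE !rmorphM /= rmorph_int mulrDl mulrA.
Qed.

Lemma Fsigma_gen_pos : exists i : 'I_n, 0 < linR f (vR A`_i).
Proof.
have [//|no_pos] := pselect (exists i : 'I_n, 0 < linR f (vR A`_i)).
have [z fz1] := Fsigma_unit; have [e zE] := genA z.
move: fz1; rewrite zE raddf_sum linear_sum big1 => [/esym/eqP | i _ /=].
  by rewrite oner_eq0.
rewrite vecR_intZ linearZ /=; suff -> : linR f (vR A`_i) = 0 by rewrite mulr0.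
apply/eqP; rewrite eq_le (Fsigma_ge0 (cone_gen i)) andbT leNgt.
by apply/negP => fi_pos; apply: no_pos; exists i.
Qed.

Lemma facet_ker_vanish g :
  (forall i : 'I_n, linR f (vR A`_i) = 0 -> linR g (vR A`_i) = 0) ->
  forall x, linR f x = 0 -> linR g x = 0.
Proof.
move=> gens_fg x /facet_ker_sub_gens/sub_gens_comb[r [r_sigma ->]].
rewrite raddf_sum big1 // => i _ /=; rewrite linearZ /=.
have [/Fsigma_sigma/gens_fg -> | /r_sigma ->] := pselect (sigma (vR A`_i)).
  by rewrite mulr0.
by rewrite mul0r.
Qed.

Lemma linC_supported (k : 'I_n -> C) :
  (forall i : 'I_n, ~ sigma (vR A`_i) -> k i = 0) ->
  linC f (\sum_(i < n) k i *: vC A`_i) = 0.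
Proof.
move=> k_sigma; rewrite linC_comb big1 // => i _.
have [/Fsigma_sigma -> | /k_sigma ->] := pselect (sigma (vR A`_i)).
  by rewrite mulr0.
by rewrite mul0r.
Qed.

Lemma Fplus_iff_E alpha : in_Fplus A f alpha <-> exists l, E_tau A sigma alpha l.
Proof.
split=> [[z [[c ->] fz]] | [l [[k [k_sigma ->]] [c [e [e_sigma Ea]]]]]].
  exists (alpha - vC (\sum_(i < n) (c i)%:R *: A`_i)); split.
    by apply: facet_ker_Cspan; rewrite linearB /= linC_vecC fz subrr.
  exists c, (fun=> 0); split=> //; rewrite opprB addrC subrK raddf_sum.
  by apply: eq_bigr => i _ /=; rewrite vecC_natZ addr0.
exists (\sum_(i < n) (c i)%:R *: A`_i); split; first by exists c.
have e_sigma' (i : 'I_n) : ~ sigma (vR A`_i) -> (e i)%:~R = 0 :> C.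
  by move/e_sigma ->.
rewrite -(subrK (\sum_(i < n) k i *: vC A`_i) alpha) Ea linearD /=.
rewrite (linC_supported k_sigma).
under eq_bigr do rewrite scalerDl.
rewrite big_split linearD /= (linC_supported e_sigma') !addr0 -linC_vecC.
rewrite [vC _]raddf_sum; apply: congr1; apply: eq_bigr => i _.
by rewrite /= vecC_natZ.
Qed.

Lemma Fplus_class alpha beta :
  eq_class A alpha beta -> in_Fplus A f alpha <-> in_Fplus A f beta.
Proof.
move=> ab; rewrite !Fplus_iff_E; have face_sigma := facet_sigma.1.
by split=> -[l El]; exists l; apply/(ab _ face_sigma l).
Qed.

Lemma Fplus_Re_pos beta :
  in_Fplus A f beta -> linC f beta != 0 -> 0 < linR f (reV beta).
Proof.
move=> [z [NAz fz]]; rewrite fz fmorph_eq0 -linC_Re fz /= => fz_neq0.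
by rewrite lt0r fz_neq0; apply/Fsigma_ge0/NA_cone.
Qed.

Lemma Fminus_Re_neg alpha beta K : eq_class A alpha beta ->
  (forall m, (K <= m)%N -> exists z, in_NA A z /\ linR f (vR z) = m%:R) ->
  (forall k, (k <= K)%N -> linC f beta != k%:R) ->
  in_Fminus A f alpha -> linR f (reV beta) < 0.
Proof.
move=> ab NA_cofinite beta_off [[m fa] not_Fplus].
have [z bE] := class_shift ab; have [k fz] := Fsigma_int z.
have fb : linC f beta = ((m + k)%:~R : R)%:C.
  by rewrite bE linearD /= linC_vecC fz fa !rmorph_int intrD.
rewrite -linC_Re fb /= ltrz0 ltNge; apply/negP => mk_ge0.
have [N mkE] : exists N : nat, m + k = N%:Z.
  by exists (absz (m + k)); rewrite gez0_abs.
have [N_le | N_gt] := leqP N K.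
  by move: (beta_off N N_le); rewrite fb mkE rmorph_nat eqxx.
apply: not_Fplus; apply/(Fplus_class ab).
have [z' [NAz' fz']] := NA_cofinite N (ltnW N_gt).
by exists z'; rewrite fz' fb mkE.
Qed.

End Facet.

Lemma facet_form_unique sigma f sigma' g :
  is_facet A sigma -> is_Fsigma A sigma f -> is_facet A sigma' -> is_Fsigma A sigma' g ->
  (forall i : 'I_n, (linR f (vR A`_i) == 0) = (linR g (vR A`_i) == 0)) -> f = g.
Proof.
move=> facet_sigma Fsigma_f facet_sigma' Fsigma_g same_zeros.
have [z fz1] := Fsigma_unit Fsigma_f; have [z' gz1] := Fsigma_unit Fsigma_g.
have g_f : g = linR g (vR z) *: f.
  apply: (proportional_forms _ fz1) => y.
  apply: (facet_ker_vanish facet_sigma Fsigma_f) => i /eqP.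
  by rewrite same_zeros => /eqP.
have [k gk] := Fsigma_int Fsigma_g z; have [k' fk'] := Fsigma_int Fsigma_f z'.
have kk' : k * k' = 1.
  by apply: (@intr_inj R); rewrite intrM -gk -fk' -linRZl -g_f gz1.
have k_ge0 : 0 <= k.
  have [i fi_pos] := Fsigma_gen_pos Fsigma_f.
  have := Fsigma_ge0 Fsigma_g (cone_gen i).
  by rewrite g_f linRZl gk pmulr_lge0 // ler0z.
have k1 : k = 1.
  have /eqP := congr1 absz kk'; rewrite abszM muln_eq1 => /andP[/eqP absk _].
  by rewrite -(gez0_abs k_ge0) absk.
by rewrite {1}g_f gk k1 scale1r.
Qed.

Definition is_facet_form f := exists sigma, is_facet A sigma /\ is_Fsigma A sigma f.

Definition zero_gens f : {set 'I_n} := [set i : 'I_n | linR f (vR A`_i) == 0].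

Lemma facet_forms_finite : exists L : seq 'rV[R]_d, forall f, is_facet_form f <-> f \in L.
Proof.
have [F FP] : exists F : {set 'I_n} -> 'rV[R]_d, forall S,
    (exists f, is_facet_form f /\ zero_gens f = S) ->
    is_facet_form (F S) /\ zero_gens (F S) = S.
  suff /fin_all_exists : forall S : {set 'I_n}, exists g,
      (exists f, is_facet_form f /\ zero_gens f = S) ->
      is_facet_form g /\ zero_gens g = S by [].
  move=> S; have [[f Pf] | none] := pselect (exists f, is_facet_form f /\ zero_gens f = S).
    by exists f.
  by exists 0.
exists [seq g <- map F (enum {set 'I_n}) | `[< is_facet_form g >]] => f.
rewrite mem_filter; split=> [Ff | /andP[/asboolP //]].
have [[sigma' [facet_sigma' Fsigma_g]] zerosE] := FP _ (ex_intro _ f (conj Ff erefl)).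
have [sigma [facet_sigma Fsigma_f]] := Ff.
have -> : f = F (zero_gens f).
  apply: facet_form_unique facet_sigma Fsigma_f facet_sigma' Fsigma_g _ => i.
  by have /setP/(_ i) := zerosE; rewrite !inE => ->.
by rewrite map_f ?mem_enum // andbT; apply/asboolP; exists sigma'.
Qed.

Lemma facet_forms_cofinite : exists K, forall f, is_facet_form f ->
  forall m, (K <= m)%N -> exists z, in_NA A z /\ linR f (vR z) = m%:R.
Proof.
have [L LE] := facet_forms_finite.
have [K HK] : exists K, forall f, f \in L ->
    forall m, (K <= m)%N -> exists z, in_NA A z /\ linR f (vR z) = m%:R.
  apply: eventually_all_seq => f /LE[sigma [_ Fsigma_f]].
  exact: Fsigma_NA_cofinite Fsigma_f.
by exists K => f /LE; apply: HK.
Qed.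

End Cone.

Theorem proposition8p16 (R : realType) (d : nat) (A : seq 'rV[int]_d)
  (hA : generates_Zd A) (alpha : 'rV[R[i]]_d) :
  (forall x, zariski_closure (eq_class A alpha) x) ->
  exists g : 'rV[R]_d, Rpos A alpha g.
Proof.
move=> dense.
have [L LE] := facet_forms_finite R hA.
have [K NA_cofinite] := facet_forms_cofinite R hA.
pose H : seq ('rV[R]_d * R[i]) := [seq (f, k%:R) | f <- L, k <- iota 0 K.+1].
have nzH : all (fun p => p.1 != 0) H.
  apply/allP => _ /allpairsP[[f k] [fL _ ->]] /=.
  by have [sigma [_ Fsigma_f]] := (LE f).2 fL; apply: Fsigma_neq0 Fsigma_f.
have [beta ab beta_off] := zariski_dense_off_hyperplanes dense nzH.
exists (reV beta) => sigma f facet_sigma Fsigma_f.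
have facet_f : is_facet_form A f by exists sigma.
have off_f k : (k <= K)%N -> linC f beta != k%:R.
  by move=> kK; apply: (beta_off (f, k%:R)); rewrite allpairs_f ?mem_iota //; apply/LE.
split=> [Fplus | Fminus].
  apply: (Fplus_Re_pos Fsigma_f); last exact: off_f 0%N _.
  exact/(Fplus_class facet_sigma Fsigma_f ab).
exact: (Fminus_Re_neg hA facet_sigma Fsigma_f ab (NA_cofinite f facet_f) off_f Fminus).
Qed.
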